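(* Let $N\ge 2$ and $u>0$. For every $x$ with $0\le x<1$ there exists a neutral evolutionary model on $N$ sites (a replacement rule $p$ satisfying the fixation assumption described in the context) whose overall fixation probability $\rho=\frac{1}{B}\sum_{i=1}^N d_i\rho_i$ equals $x$. Consequently, the molecular clock rate $K=Nu\rho$ can take any value in $[0,Nu)$.
   Context: There are $N$ sites $1,\ldots,N$, each always occupied by one individual of type M (mutant) or R (resident); a state is $\mathbf{s}\in\{\mathrm{M},\mathrm{R}\}^N$. A replacement event is a pair $(R,\alpha)$ with $R\subseteq\{1,\ldots,N\}$ and $\alpha:R\to\{1,\ldots,N\}$. A replacement rule is a probability distribution $p(R,\alpha)$ on replacement events, independent of the state. The evolutionary Markov chain: at each time-step an event $(R,\alpha)$ is drawn with probability $p(R,\alpha)$ and the new state is $s_i'=s_i$ if $i\notin R$, $s_i'=s_{\alpha(i)}$ if $i\in R$. Fixation assumption: there exist a site $i$ and a finite sequence of replacement events, each of positive probability, such that if these events occur consecutively (from any initial state) every site ends up carrying the type initially at site $i$. Define $e_{ij}=\sum_{(R,\alpha):\, j\in R,\ \alpha(j)=i}p(R,\alpha)$, $b_i=\sum_j e_{ij}$, $d_i=\sum_j e_{ji}$, $B=\sum_{i,j}e_{ij}$. The site-specific fixation probability $\rho_i$ is the probability that the chain started from the state with M at site $i$ and R elsewhere is eventually absorbed in $(\mathrm{M},\ldots,\mathrm{M})$. *)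

From HB Require Import structures.
From mathcomp Require Import all_boot all_order all_algebra.
From mathcomp Require Import all_classical all_reals all_analysis.
Set Implicit Arguments. Unset Strict Implicit. Unset Printing Implicit Defensive.
Import Order.TTheory GRing.Theory Num.Theory.
Import numFieldNormedType.Exports.
Local Open Scope ring_scope.

(* Sites are 'I_N. A state assigns to each site a type: true = M (mutant),
   false = R (resident). *)
Definition state (N : nat) := {ffun 'I_N -> bool}.

(* A replacement event (R, alpha): R a set of sites, alpha the parent map.
   alpha is represented as a total map 'I_N -> 'I_N; only its values on R
   matter. *)
Definition event (N : nat) := ({set 'I_N} * {ffun 'I_N -> 'I_N})%type.

Definition apply_event (N : nat) (ev : event N) (s : state N) : state N :=
  [ffun i => if i \in ev.1 then s (ev.2 i) else s i].

Definition is_replacement_rule (R : realType) (N : nat) (p : {ffun event N -> R}) :=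
  (forall ev, 0 <= p ev) /\ \sum_(ev : event N) p ev = 1.

Definition apply_events (N : nat) (evs : seq (event N)) (s : state N) : state N :=
  foldl (fun t ev => apply_event ev t) s evs.

Definition fixation_assumption (R : realType) (N : nat) (p : {ffun event N -> R}) :=
  exists (i : 'I_N) (evs : seq (event N)),
    (forall ev, ev \in evs -> 0 < p ev) /\
    (forall s : state N, forall j : 'I_N, apply_events evs s j = s i).

Definition trans (R : realType) (N : nat) (p : {ffun event N -> R})
  (s s' : state N) : R :=
  \sum_(ev : event N | apply_event ev s == s') p ev.

Fixpoint nstep (R : realType) (N : nat) (p : {ffun event N -> R}) (n : nat)
  (s s' : state N) : R :=
  match n with
  | 0 => (s == s')%:R
  | n'.+1 => \sum_(t : state N) trans p s t * nstep p n' t s'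
  end.

Definition allM (N : nat) : state N := [ffun => true].
Definition single (N : nat) (i : 'I_N) : state N := [ffun j => j == i].

(* Since (M,...,M) is absorbing,
   the event "eventually absorbed" is the increasing union of the events
   "in (M,...,M) at time n", so its probability is the limit of the n-step
   probabilities. *)
Definition rho_site (R : realType) (N : nat) (p : {ffun event N -> R}) (i : 'I_N) : R :=
  limn (fun n => nstep p n (single i) (allM N)).

Definition e_rate (R : realType) (N : nat) (p : {ffun event N -> R}) (i j : 'I_N) : R :=
  \sum_(ev : event N | (j \in ev.1) && (ev.2 j == i)) p ev.
Definition b_rate (R : realType) (N : nat) (p : {ffun event N -> R}) (i : 'I_N) : R :=
  \sum_j e_rate p i j.
Definition d_rate (R : realType) (N : nat) (p : {ffun event N -> R}) (i : 'I_N) : R :=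
  \sum_j e_rate p j i.
Definition B_total (R : realType) (N : nat) (p : {ffun event N -> R}) : R :=
  \sum_i \sum_j e_rate p i j.

Definition rho_overall (R : realType) (N : nat) (p : {ffun event N -> R}) : R :=
  (B_total p)^-1 * \sum_i d_rate p i * rho_site p i.

From HB Require Import structures.
From mathcomp Require Import all_boot all_order all_algebra.
From mathcomp Require Import all_classical all_reals all_analysis.
From mathcomp Require Import ring.
Import Order.TTheory GRing.Theory Num.Theory.
Import numFieldNormedType.Exports.
Local Open Scope ring_scope.

(* Take a rule with only two events.  With probability [1 - q] every
   site other than site 0 is replaced by the offspring of site 0, and with
   probability [q] site 0 is replaced by its own offspring.  A mutant at site 0
   fixes almost surely (the first event eventually occurs), a mutant elsewhere
   is wiped out at once or never spreads, so [rho = d_0 / B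
   = q / (q + (N - 1) (1 - q))], which increases continuously from 0 to 1 as
   [q] runs through [[0, 1)]. *)

Section IndicatorSums.
Variables (R : pzSemiRingType) (T : finType).

Lemma sumr_eq_indicator (P : pred T) (a : T) :
  \sum_(t | P t) ((t == a)%:R : R) = (P a)%:R.
Proof.
rewrite big_mkcond (bigD1 a) //= eqxx big1 ?addr0; first by case: (P a).
by move=> t /negbTE ->; case: (P t).
Qed.

Lemma sumr_indicator_mull (x : T) (g : T -> R) :
  \sum_t (x == t)%:R * g t = g x.
Proof.
rewrite (bigD1 x) //= eqxx mul1r big1 ?addr0 // => t /negbTE.
by rewrite eq_sym => ->; rewrite mul0r.
Qed.

End IndicatorSums.

Section TwoEventRule.
Variables (R : realType) (n : nat) (q : R).
Let N := n.+2.
Let i0 : 'I_N := ord0.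

Definition copy_founder : event N := ([set~ i0], [ffun=> i0]).
Definition renew_founder : event N := ([set i0], [ffun k => k]).

Definition two_event_rule : {ffun event N -> R} :=
  [ffun ev => (1 - q) * (ev == copy_founder)%:R + q * (ev == renew_founder)%:R].

Lemma copy_founder_neq_renew_founder : copy_founder != renew_founder.
Proof. by apply/negP => /eqP [] /setP /(_ i0); rewrite !inE eqxx. Qed.

Lemma sum_two_event_rule (P : pred (event N)) :
  \sum_(ev | P ev) two_event_rule ev
    = (1 - q) * (P copy_founder)%:R + q * (P renew_founder)%:R.
Proof.
under eq_bigr do rewrite ffunE.
by rewrite big_split /= -!mulr_sumr !sumr_eq_indicator.
Qed.

Lemma apply_renew_founder s : apply_event renew_founder s = s.
Proof. by apply/ffunP => k; rewrite !ffunE; case: ifP. Qed.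

Lemma nstep_two_event_rule m s s' :
  nstep two_event_rule m.+1 s s'
    = (1 - q) * nstep two_event_rule m (apply_event copy_founder s) s'
      + q * nstep two_event_rule m s s'.
Proof.
rewrite /=.
under eq_bigr do
  rewrite /trans sum_two_event_rule apply_renew_founder mulrDl -!mulrA.
by rewrite big_split /= -!mulr_sumr !sumr_indicator_mull.
Qed.

Lemma apply_copy_founder_allM : apply_event copy_founder (allM N) = allM N.
Proof. by apply/ffunP => k; rewrite !ffunE; case: ifP. Qed.

Lemma apply_copy_founder_single : apply_event copy_founder (single i0) = allM N.
Proof.
apply/ffunP => k; rewrite !ffunE /= !inE.
by case: ifP => [|/negbFE]; rewrite ?ffunE ?eqxx.
Qed.

Lemma nstep_allM_allM m : nstep two_event_rule m (allM N) (allM N) = 1.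
Proof.
elim: m => [|m IH]; first by rewrite /= eqxx.
by rewrite nstep_two_event_rule apply_copy_founder_allM IH !mulr1 subrK.
Qed.

(* Site 0 is never replaced by another site, so a resident there stays. *)
Lemma nstep_allM_eq0 m (s : state N) :
  s i0 = false -> nstep two_event_rule m s (allM N) = 0.
Proof.
elim: m s => [|m IH] s s0.
  by rewrite /=; case: eqP => // sE; move: s0; rewrite sE ffunE.
rewrite nstep_two_event_rule !IH ?mulr0 ?addr0 //.
by rewrite ffunE /= !inE eqxx.
Qed.

Lemma nstep_single_allM m :
  nstep two_event_rule m (single i0) (allM N) = 1 - q ^+ m.
Proof.
elim: m => [|m IH].
  rewrite /= expr0 subrr; case: eqP => // /ffunP /(_ (lift i0 ord0)).
  by rewrite !ffunE.
rewrite nstep_two_event_rule apply_copy_founder_single nstep_allM_allM IH exprS.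
ring.
Qed.

Hypothesis q_ge0 : 0 <= q.
Hypothesis q_lt1 : q < 1.

Lemma rho_site_founder : rho_site two_event_rule i0 = 1.
Proof.
rewrite /rho_site (_ : (fun m => _) = (fun m => 1 - q ^+ m)); last first.
  by apply: funext => m; rewrite nstep_single_allM.
have q_norm_lt1 : `|q| < 1 by rewrite ger0_norm.
have := cvgB (cvg_cst (1 : R)) (cvg_expr q_norm_lt1); rewrite subr0 => lim1.
by apply: cvg_lim => //; apply: lim1.
Qed.

Lemma rho_site_other j : j != i0 -> rho_site two_event_rule j = 0.
Proof.
move=> ji0; rewrite /rho_site (_ : (fun m => _) = (fun m => 0)).
  exact: lim_cst.
by apply: funext => m; apply: nstep_allM_eq0; rewrite ffunE eq_sym (negbTE ji0).
Qed.

Lemma e_rate_two_event_rule i j : e_rate two_event_rule i j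
  = (1 - q) * ((j != i0) && (i0 == i))%:R + q * ((j == i0) && (j == i))%:R.
Proof. by rewrite /e_rate sum_two_event_rule /= !inE !ffunE. Qed.

Lemma d_rate_founder : d_rate two_event_rule i0 = q.
Proof.
rewrite /d_rate (bigD1 i0) //= big1 ?addr0.
  by rewrite e_rate_two_event_rule eqxx /= mulr0 add0r mulr1.
move=> j ji0; rewrite e_rate_two_event_rule eqxx /= mulr0 add0r.
by rewrite eq_sym (negbTE ji0) mulr0.
Qed.

Lemma B_total_two_event_rule : B_total two_event_rule = q + n.+1%:R * (1 - q).
Proof.
rewrite /B_total (bigD1 i0) // [X in _ + X = _]big1 ?addr0; last first.
  move=> i /negbTE i0F; apply: big1 => j _.
  rewrite e_rate_two_event_rule (eq_sym i0 i) i0F andbF mulr0 add0r.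
  by case: (j =P i0) => [->|] /=; rewrite ?(eq_sym i0 i) ?i0F mulr0.
rewrite (bigD1 i0) // e_rate_two_event_rule eqxx /= mulr0 add0r mulr1.
congr (_ + _); rewrite (eq_bigr (fun _ => 1 - q)); last first.
  move=> j ji0.
  by rewrite e_rate_two_event_rule ji0 eqxx (negbTE ji0) /= mulr1 mulr0 addr0.
by rewrite sumr_const mulr_natl cardC1 card_ord.
Qed.

Lemma rho_overall_two_event_rule :
  rho_overall two_event_rule = q / (q + n.+1%:R * (1 - q)).
Proof.
rewrite /rho_overall B_total_two_event_rule (bigD1 i0) //= big1 ?addr0.
  by rewrite d_rate_founder rho_site_founder mulr1 mulrC.
by move=> j ji0; rewrite rho_site_other // mulr0.
Qed.

Lemma two_event_rule_replacement_rule : is_replacement_rule two_event_rule.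
Proof.
split; last by rewrite (sum_two_event_rule predT) /= !mulr1 subrK.
by move=> ev; rewrite ffunE addr_ge0 // mulr_ge0 // subr_ge0 ltW.
Qed.

Lemma two_event_rule_fixation : fixation_assumption two_event_rule.
Proof.
exists i0, [:: copy_founder]; split.
  move=> ev; rewrite inE => /eqP ->.
  rewrite ffunE eqxx (negbTE copy_founder_neq_renew_founder).
  by rewrite mulr1 mulr0 addr0 subr_gt0.
move=> s j; rewrite /apply_events /= !ffunE /= !inE.
by case: ifP => // /negbFE /eqP ->.
Qed.

End TwoEventRule.

Lemma rho_overall_onto (R : realType) (n : nat) (x : R) : 0 <= x < 1 ->
  exists p : {ffun event n.+2 -> R},
    [/\ is_replacement_rule p, fixation_assumption p & rho_overall p = x].
Proof.
move=> /andP [x0 x1].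
have den_gt0 : 0 < 1 + x * n%:R by rewrite ltr_wpDr // mulr_ge0.
(* the solution of [q / (q + (n + 1) (1 - q)) = x] *)
pose q := x * n.+1%:R / (1 + x * n%:R).
have q0 : 0 <= q by rewrite divr_ge0 ?mulr_ge0 // ltW.
have q1 : q < 1.
  by rewrite ltr_pdivrMr // mul1r -natr1 mulrDr mulr1 addrC ltrD2r.
exists (two_event_rule R n q); split.
- exact: two_event_rule_replacement_rule.
- exact: two_event_rule_fixation.
have B_eq : q + n.+1%:R * (1 - q) = n.+1%:R / (1 + x * n%:R).
  by rewrite /q; field; exact: lt0r_neq0.
rewrite rho_overall_two_event_rule // B_eq /q; field.
by rewrite !lt0r_neq0.
Qed.

Theorem mainTheorem4 (R : realType) (N : nat) (u : R) :
  (2 <= N)%N -> 0 < u ->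
  (forall x : R, 0 <= x < 1 ->
     exists p : {ffun event N -> R},
       [/\ is_replacement_rule p, fixation_assumption p & rho_overall p = x]) /\
  (forall K : R, 0 <= K < N%:R * u ->
     exists p : {ffun event N -> R},
       [/\ is_replacement_rule p, fixation_assumption p
         & N%:R * u * rho_overall p = K]).
Proof.
move=> N_ge2 u_gt0; case: N N_ge2 => [|[|n]] // _.
split=> [x|K /andP [K0 KNu]]; first exact: rho_overall_onto.
have Nu_gt0 : 0 < n.+2%:R * u by rewrite mulr_gt0.
have [|p [rule fixation rhoE]] := @rho_overall_onto R n (K / (n.+2%:R * u)).
  by rewrite divr_ge0 ?ltr_pdivrMr ?mul1r // ltW.
by exists p; split => //; rewrite rhoE mulrCA divff ?mulr1 // lt0r_neq0.
Qed.
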